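(* Consider a piecewise affine (PWA) system, as defined in the context, satisfying (A1) and (A2). Then the relative degree of every component model is $0$ for all time, i.e. $\mu_q = 0$ for all $q\in\{1,\dots,|Q|\}$ and all $k$, if and only if the global dynamical relative degree of the system is $0$.
   Context: A discrete-time piecewise affine (PWA) system is $x_{k+1}=\mathbf{A}_k x_k+\mathbf{B}_k u_k+\mathbf{F}_k$, $y_k=\mathbf{C}_k x_k+\mathbf{D}_k u_k+\mathbf{G}_k$, $k\in\mathbb{Z}$, with state $x_k\in\mathbb{R}^{n_x}$, input $u_k\in\mathbb{R}^{n_u}$, output $y_k\in\mathbb{R}^{n_y}$. For each $M\in\{A,B,F,C,D,G\}$, $\mathbf{M}_k=\sum_{q=1}^{|Q|} M_{q,k}K_q(\delta_k)$, where the $M_{q,k}$ are real matrices (possibly time-varying), $\delta_k=\delta(x_k)=H(Px_k-\theta)$ with $H$ the Heaviside step function applied elementwise, $P\in\mathbb{R}^{n_P\times n_x}$, $\theta\in\mathbb{R}^{n_P}$, and $K_q(\delta)=1$ if $\delta\in\Delta^*_q$ and $0$ otherwise, $\Delta^*_q$ being a set of binary vectors (signatures of location $q$). The locations $Q_q=\{x:\delta(x)\in\Delta^*_q\}$, $q=1,\dots,|Q|$, are disjoint, have union $\mathbb{R}^{n_x}$, and each is a union of disjoint convex polytopes (intersections of half spaces). The $q$-th component model is the affine time-varying system with matrices $A_{q,k},B_{q,k},F_{q,k},C_{q,k},D_{q,k},G_{q,k}$, and $\mu_q$ denotes its relative degree (the number of time steps it takes for an input value to influence the output; in particular $\mu_q=0$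 means $D_{q,k}\neq 0$). Global dynamical relative degree: the smallest integer $\mu\ge 0$ such that the explicit expression of $y_{k+\mu}$ in terms of the component matrices, the selector functions $K_q$, $x_k$ and $u_i$ ($i\ge k$) contains $u_k$ outside of a selector function for every switching sequence (sequence of visited locations) on the time steps $k,\dots,k+\mu$. Assumptions: (A1) $x_0\in X_0$, where $X_0$ is the set of initial conditions from which every location $Q_q$ is reachable in finite time; (A2) the system is single-input single-output, $n_u=n_y=1$. *)

From HB Require Import structures.
From mathcomp Require Import all_boot all_order all_algebra.
From mathcomp Require Import reals.
Set Implicit Arguments. Unset Strict Implicit. Unset Printing Implicit Defensive.
Import Order.TTheory GRing.Theory Num.Theory.
Local Open Scope ring_scope.

(* A discrete-time PWA system with nQ component models (locations indexed by
   'I_nQ), state dimension nx, input dimension nu, output dimension ny and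
   nP partition hyperplanes. *)
Record PWA (R : realType) (nx nu ny nP nQ : nat) := MkPWA {
  pA : 'I_nQ -> int -> 'M[R]_(nx, nx);
  pB : 'I_nQ -> int -> 'M[R]_(nx, nu);
  pF : 'I_nQ -> int -> 'cV[R]_nx;
  pC : 'I_nQ -> int -> 'M[R]_(ny, nx);
  pD : 'I_nQ -> int -> 'M[R]_(ny, nu);
  pG : 'I_nQ -> int -> 'cV[R]_ny;
  pP : 'M[R]_(nP, nx);
  ptheta : 'cV[R]_nP;
  (* signatures Delta*_q of each location *)
  pSig : 'I_nQ -> {set {ffun 'I_nP -> bool}}
}.

Section PWADefs.
Variables (R : realType) (nx nu ny nP nQ : nat).
Variable S : PWA R nx nu ny nP nQ.

(* Heaviside step, convention H(0) = 1 *)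
Definition heaviside (s : R) : bool := 0 <= s.

Definition delta (x : 'cV[R]_nx) : {ffun 'I_nP -> bool} :=
  [ffun i => heaviside ((pP S *m x - ptheta S) i 0)].

Definition selK (q : 'I_nQ) (x : 'cV[R]_nx) : R :=
  if delta x \in pSig S q then 1 else 0.

Definition locations_partition : Prop :=
  forall x : 'cV[R]_nx, exists! q : 'I_nQ, delta x \in pSig S q.

Definition next_state (k : int) (x : 'cV[R]_nx) (u : 'cV[R]_nu) : 'cV[R]_nx :=
  \sum_(q < nQ) (selK q x *: (pA S q k *m x + pB S q k *m u + pF S q k)).

Definition output (k : int) (x : 'cV[R]_nx) (u : 'cV[R]_nu) : 'cV[R]_ny :=
  \sum_(q < nQ) (selK q x *: (pC S q k *m x + pD S q k *m u + pG S q k)).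

Fixpoint traj (x0 : 'cV[R]_nx) (u : int -> 'cV[R]_nu) (n : nat) : 'cV[R]_nx :=
  match n with
  | 0 => x0
  | n'.+1 => next_state n'%:Z (traj x0 u n') (u n'%:Z)
  end.

Definition in_X0 (x0 : 'cV[R]_nx) : Prop :=
  forall q : 'I_nQ, exists (u : int -> 'cV[R]_nu) (n : nat),
    delta (traj x0 u n) \in pSig S q.

(* Coefficient of u_k in the explicit expression of y_{k+mu} along the
   switching sequence sigma (sigma j = location visited at time k + j).
   Phi k sigma j = A_{sigma j, k+j} ... A_{sigma 1, k+1} B_{sigma 0, k}
   is the coefficient of u_k in x_{k+j+1}. *)
Fixpoint Phi (k : int) (sigma : nat -> 'I_nQ) (j : nat) : 'M[R]_(nx, nu) :=
  match j with
  | 0 => pB S (sigma 0%N) k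
  | j'.+1 => pA S (sigma j) (k + j%:Z) *m Phi k sigma j'
  end.

Definition ucoef (k : int) (sigma : nat -> 'I_nQ) (mu : nat) : 'M[R]_(ny, nu) :=
  match mu with
  | 0 => pD S (sigma 0%N) k
  | j.+1 => pC S (sigma mu) (k + mu%:Z) *m Phi k sigma j
  end.

Definition comp_rel_deg (q : 'I_nQ) (k : int) (mu : nat) : Prop :=
  (ucoef k (fun _ => q) mu != 0) /\
  forall nu' : nat, (nu' < mu)%N -> ucoef k (fun _ => q) nu' = 0.

(* u_k appears (outside selector functions) in y_{k+mu} for every
   switching sequence on the steps k, ..., k+mu, for every time k. *)
Definition global_rd_holds (mu : nat) : Prop :=
  forall (k : int) (sigma : nat -> 'I_nQ), ucoef k sigma mu != 0.

Definition global_rel_deg (mu : nat) : Prop :=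
  (global_rd_holds mu) /\ forall nu' : nat, (nu' < mu)%N -> ~ global_rd_holds nu'.
End PWADefs.

From HB Require Import structures.
From mathcomp Require Import all_boot all_order all_algebra.
From mathcomp Require Import reals.
Import Order.TTheory GRing.Theory Num.Theory.
Local Open Scope ring_scope.

(* At relative degree 0 the coefficient of u_k in y_k is the feedthrough
   matrix D of the current location, so both sides of the equivalence say
   that D_{q,k} <> 0 for every location q and time k. *)

Section RelativeDegreeZero.
Variables (R : realType) (nx nu ny nP nQ : nat).
Variable S : PWA R nx nu ny nP nQ.

Lemma comp_rel_deg0 (q : 'I_nQ) (k : int) :
  comp_rel_deg S q k 0 <-> pD S q k != 0.
Proof. by split=> [[]//|nzD]; split. Qed.

Lemma global_rd_holds0 : global_rd_holds S 0 <-> forall q k, pD S q k != 0.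
Proof.
split=> [rd0 q k|nzD k sigma]; first exact: (rd0 k (fun=> q)).
exact: nzD.
Qed.

Lemma global_rel_deg0 : global_rel_deg S 0 <-> global_rd_holds S 0.
Proof. by split=> [[]//|rd0]; split. Qed.

End RelativeDegreeZero.

Theorem lemma1 (R : realType) (nx nu ny nP nQ : nat)
    (S : PWA R nx nu ny nP nQ)
    (Hpart : locations_partition S)
    (x0 : 'cV[R]_nx) (HA1 : in_X0 S x0)
    (HA2u : nu = 1%N) (HA2y : ny = 1%N) :
  (forall (q : 'I_nQ) (k : int), comp_rel_deg S q k 0) <-> global_rel_deg S 0.
Proof.
rewrite global_rel_deg0 global_rd_holds0.
by split=> nzD q k; [apply/comp_rel_deg0 | apply/comp_rel_deg0].
Qed.
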